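(* Let $\mathcal A=\{A_1,\dots,A_K\}$ be a finite partition of $\mathcal M$ into Borel sets and $Q$ a probability measure on $\mathcal G$. Then $\mathfrak R_{\mathcal A}\mathfrak S_nQ$ is absolutely continuous with respect to $\mathfrak R_{\mathcal A}Q$ with $$\frac{d\mathfrak R_{\mathcal A}\mathfrak S_nQ}{d\mathfrak R_{\mathcal A}Q}=e^{-\hat S_{Q,\mathcal A}/n},$$ where $\hat S_{Q,\mathcal A}(g):=-n\sum_{A\in\mathcal A}\Bigl(\log Q\bigl[e^{-S(X)/n}\,\big|\,X_A=g_A\bigr]-\log Q\bigl[e^{-S(X)/n}\bigr]\Bigr)$.
   Context: $\mathcal M$ is a complete separable metric space; $\mathcal G$ the finite integer-valued Borel measures on $\mathcal M$; $S:\mathcal G\to\mathbb R_+$ a Borel selective cost. For $g\in\mathcal G$ and Borel $R$, $g_R(B):=g(B\cap R)$. $X$ denotes the canonical random element of $\mathcal G$ ($X(g)=g$); $Q[\cdot\mid X_A=g_A]$ is a regular conditional distribution. Selection: $\mathfrak S_nP[F]:=\int e^{-S(g)/n}F(g)\,dP(g)/\int e^{-S(g)/n}\,dP(g)$. Annealed recombination: $\mathfrak R_{\mathcal A}Q[F]:=\int\cdots\int F(g^{(1)}_{A_1}+\cdots+g^{(K)}_{A_K})\,dQ(g^{(1)})\cdots dQ(g^{(K)})$. *)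

From HB Require Import structures.
From mathcomp Require Import all_boot all_order all_algebra.
From mathcomp Require Import all_classical all_reals all_analysis measurable_realfun.
Set Implicit Arguments. Unset Strict Implicit. Unset Printing Implicit Defensive.
Import Order.TTheory GRing.Theory Num.Theory numFieldNormedType.Exports.
Local Open Scope classical_set_scope.
Local Open Scope ring_scope.

Section Gdefs.
Context {R : realType} {M : pseudoMetricType R}.

Definition borelM : set (set M) := <<s open >>.

(* finite integer-valued Borel measures on M (written out: nat-valued on Borel
   sets, null on the empty set, countably additive on Borel sets) *)
Definition is_gmeas (g : set M -> \bar R) : Prop :=
  [/\ g set0 = 0%E,
      (forall B, borelM B -> exists k : nat, g B = (k%:R)%:E) &
      (forall F : nat -> set M, (forall i, borelM (F i)) -> trivIset setT F ->
         (fun k => (\sum_(0 <= i < k) g (F i))%E) @ \oo --> g (\bigcup_i F i))].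

Lemma borelC (A : set M) : borelM A -> borelM (~` A).
Proof. by move=> bA; rewrite -(setTD A); exact: (@sigma_algebraCD _ setT open A). Qed.

Lemma borelU (A B : set M) : borelM A -> borelM B -> borelM (A `|` B).
Proof.
move=> bA bB; rewrite -bigcup2E; apply: sigma_algebra_bigcup => -[|[|i]] //=.
exact: sigma_algebra0.
Qed.

Lemma borelI (A B : set M) : borelM A -> borelM B -> borelM (A `&` B).
Proof.
move=> bA bB; rewrite -[A `&` B]setCK setCI.
by apply: borelC; apply: borelU; apply: borelC.
Qed.

Record gmeas := GMeas { gval :> set M -> \bar R; gvalP : is_gmeas gval }.

Lemma is_gmeas0 : is_gmeas (fun _ => 0%E).
Proof.
split => //.
  by move=> B _; exists 0%N.
move=> F _ _; rewrite [X in X @ _ --> _](_ : _ = fun=> 0%E); last first.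
  by apply: funext => k; rewrite big1.
exact: cvg_cst.
Qed.

Definition gzero : gmeas := GMeas is_gmeas0.

HB.instance Definition _ := gen_eqMixin gmeas.
HB.instance Definition _ := gen_choiceMixin gmeas.
HB.instance Definition _ := isPointed.Build gmeas gzero.

Definition gsets : set (set gmeas) :=
  [set E | exists B, borelM B /\
     exists U : set (\bar R), measurable U /\ E = (fun g : gmeas => g B) @^-1` U].

Definition G := g_sigma_algebraType gsets.

Lemma restr_gmeas (A : set M) (g : G) : borelM A -> is_gmeas (fun B => g (B `&` A)).
Proof.
move=> bA; case: (gvalP g) => g0 gnat gadd; split.
- by rewrite set0I.
- move=> B bB; apply: gnat; exact: borelI.
- move=> F bF tF; rewrite setI_bigcupl; apply: gadd.
    by move=> i; apply: borelI.
  move=> i j _ _ [x [[Fix _] [Fjx _]]]; apply: (tF i j) => //; by exists x.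
Qed.

Definition restr (A : set M) (g : G) : G :=
  match pselect (borelM A) with
  | left bA => GMeas (restr_gmeas g bA)
  | right _ => g
  end.

Lemma add_gmeas (g h : G) : is_gmeas (fun B => g B + h B)%E.
Proof.
case: (gvalP g) => g0 gnat gadd; case: (gvalP h) => h0 hnat hadd; split.
- by rewrite g0 h0 adde0.
- move=> B bB; have [k gk] := gnat B bB; have [l hl] := hnat B bB.
  by exists (k + l)%N; rewrite gk hl natrD.
- move=> F bF tF.
  rewrite [X in X @ _ --> _](_ : _ = (fun k => \sum_(0 <= i < k) g (F i)) \+
                                    (fun k => \sum_(0 <= i < k) h (F i)))%E; last first.
    by apply: funext => k; rewrite /= big_split.
  apply: cvgeD; [|exact: gadd|exact: hadd].
  have bU : borelM (\bigcup_i F i) by apply: sigma_algebra_bigcup.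
  have [k ->] := gnat _ bU; have [l ->] := hnat _ bU; by [].
Qed.

Definition gadd (g h : G) : G := GMeas (add_gmeas g h).

End Gdefs.
Arguments G {R} M.

Section Ops.
Context {R : realType} {M : pseudoMetricType R}.
Local Notation G := (G M).
Local Open Scope ereal_scope.

Definition wS (S : G -> R) (n : nat) (g : G) : R := expR (- S g / n%:R).

Definition sel (P : {measure set G -> \bar R}) (S : G -> R) (n : nat)
    (F : G -> \bar R) : \bar R :=
  (\int[P]_g ((wS S n g)%:E * F g)) *
  ((fine (\int[P]_g (wS S n g)%:E))^-1)%:E.

(* annealed recombination R_A Q[F] for a functional I (an integral against Q):
   R_A Q[F] = \int..\int F(g1_{A1} + ... + gK_{AK}) dQ(g1)..dQ(gK) *)
Fixpoint recomb_rec (I : (G -> \bar R) -> \bar R) (As : seq (set M)) (acc : G)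
    (F : G -> \bar R) : \bar R :=
  match As with
  | [::] => F acc
  | A :: As' => I (fun g => recomb_rec I As' (gadd acc (restr A g)) F)
  end.

Definition recomb (I : (G -> \bar R) -> \bar R) (K : nat) (A : 'I_K -> set M)
    (F : G -> \bar R) : \bar R :=
  recomb_rec I [seq A i | i <- enum 'I_K] gzero F.

Definition is_borel_partition (K : nat) (A : 'I_K -> set M) : Prop :=
  [/\ forall i, borelM (A i),
      forall i, A i !=set0,
      forall i j, i != j -> A i `&` A j = set0 &
      \bigcup_i A i = setT].

Definition is_rcd (Q : probability G R) (A : set M) (kappa : G -> probability G R) :=
  [/\ forall B, measurable B -> measurable_fun setT (fun g => kappa g B),
      forall g, kappa g = kappa (restr A g) &
      forall B C, measurable B -> measurable C ->
        Q (B `&` (restr A) @^-1` C) = \int[Q]_(g in (restr A) @^-1` C) kappa g B].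

Definition Shat (Q : probability G R) (S : G -> R) (n : nat) (K : nat)
    (kappa : 'I_K -> G -> probability G R) (g : G) : \bar R :=
  - (n%:R)%:E * \sum_(i < K) (lne (\int[kappa i g]_h (wS S n h)%:E)
                              - lne (\int[Q]_h (wS S n h)%:E)).

End Ops.

From HB Require Import structures.
From mathcomp Require Import all_boot all_order all_algebra.
From mathcomp Require Import all_classical all_reals all_analysis measurable_realfun.
Import Order.TTheory GRing.Theory Num.Theory numFieldNormedType.Exports.
Local Open Scope classical_set_scope.
Local Open Scope ring_scope.

(** The disintegration of [Q] along [X_A] turns the selection weight
  [e^{-S(g)/n}] of an integrand depending on [g] only through [g_A] into the
  conditional mean [Q[e^{-S/n} | X_A = g_A]].  Hence selecting the block of a
  recombination taken from [A_i] multiplies the integrand by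
  [Q[e^{-S/n} | X_A_i = g_A_i] / Q[e^{-S/n}]].  Since the blocks are disjoint,
  this factor can be read off the final recombined configuration, and induction
  over the blocks collects the product of the factors, i.e. [e^{-Ŝ/n}]. *)

Section gmeas_algebra.
Context {R : realType} {M : pseudoMetricType R}.
Local Notation G := (G M).
Local Open Scope ereal_scope.

Lemma gmeas_ext (g h : G) : (forall B, g B = h B) -> g = h.
Proof.
case: g h => g gP [h hP] /= /funext eqgh; subst h.
by congr GMeas; exact: Prop_irrelevance.
Qed.

Lemma restrE (A : set M) (g : G) B : borelM A -> restr A g B = g (B `&` A).
Proof. by move=> bA; rewrite /restr; case: pselect. Qed.

Lemma gadd0g (g : G) : gadd gzero g = g.
Proof. by apply: gmeas_ext => B; rewrite /= add0e. Qed.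

Lemma gaddg0 (g : G) : gadd g gzero = g.
Proof. by apply: gmeas_ext => B; rewrite /= adde0. Qed.

Lemma restr_gzero A : borelM A -> restr A (gzero : G) = gzero.
Proof. by move=> bA; apply: gmeas_ext => B; rewrite restrE. Qed.

Lemma restr_set0 (g : G) : restr set0 g = gzero.
Proof.
apply: gmeas_ext => B; rewrite restrE ?setI0; last exact: sigma_algebra0.
by case: (gvalP g).
Qed.

Lemma restr_gadd A (g h : G) : borelM A ->
  restr A (gadd g h) = gadd (restr A g) (restr A h).
Proof. by move=> bA; apply: gmeas_ext => B; rewrite /= !restrE. Qed.

Lemma restr_restr A A' (g : G) : borelM A -> borelM A' ->
  restr A (restr A' g) = restr (A `&` A') g.
Proof.
move=> bA bA'; apply: gmeas_ext => B.
by rewrite !restrE ?setIA //; exact: borelI.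
Qed.

Lemma restr_gadd_restr A (g h : G) : borelM A ->
  restr A (gadd g (restr A h)) = gadd (restr A g) (restr A h).
Proof. by move=> bA; rewrite restr_gadd // restr_restr // setIid. Qed.

Lemma restr_gadd_restr_disjoint A A' (g h : G) : borelM A -> borelM A' ->
  A `&` A' = set0 -> restr A (gadd g (restr A' h)) = restr A g.
Proof.
by move=> bA bA' AA'0; rewrite restr_gadd // restr_restr // AA'0 restr_set0 gaddg0.
Qed.

Lemma measurable_eval B : borelM B -> measurable_fun [set: G] (fun g : G => g B).
Proof.
move=> bB _ U mU; rewrite setTI; apply: sub_gen_smallest.
by exists B; split => //; exists U.
Qed.

Lemma measurable_restr A : borelM A -> measurable_fun [set: G] (restr A).
Proof.
move=> bA; apply: measurability; first reflexivity.
move=> _ [E [B [bB [U [mU ->]]]] <-]; rewrite setTI.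
apply: sub_gen_smallest; exists (B `&` A); split; first exact: borelI.
by exists U; split => //; apply/seteqP; split => g /=; rewrite restrE.
Qed.

Lemma measurable_gadd : measurable_fun [set: G * G] (fun p => gadd p.1 p.2).
Proof.
apply: measurability; first reflexivity.
move=> _ [E [B [bB [U [mU ->]]]] <-]; rewrite setTI.
rewrite -[X in measurable X]setTI.
apply: (@emeasurable_funD _ _ _ _ (fun p : G * G => p.1 B) (fun p => p.2 B)) => //.
  exact: measurableT_comp (measurable_eval _ bB) measurable_fst.
exact: measurableT_comp (measurable_eval _ bB) measurable_snd.
Qed.

Lemma measurable_gaddl (g : G) : measurable_fun [set: G] (gadd g).
Proof.
apply: (measurableT_comp (f := fun p : G * G => gadd p.1 p.2) (g := pair g)).
  exact: measurable_gadd.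
exact: measurable_fun_pair.
Qed.

Lemma measurable_gadd_restr A : borelM A ->
  measurable_fun [set: G * G] (fun p => gadd p.1 (restr A p.2)).
Proof.
move=> bA; apply: (measurableT_comp (f := fun p : G * G => gadd p.1 p.2)
                    (g := fun p : G * G => (p.1, restr A p.2))).
  exact: measurable_gadd.
apply: measurable_fun_pair; first exact: measurable_fst.
exact: measurableT_comp (measurable_restr A bA) measurable_snd.
Qed.

End gmeas_algebra.

Section integral_positivity.
Context d (T : measurableType d) (R : realType).
Local Open Scope ereal_scope.

Lemma integral_gt0 (mu : {measure set T -> \bar R}) (f : T -> R) :
  mu [set: T] != 0 -> measurable_fun [set: T] f -> (forall x, (0 < f x)%R) ->
  0 < \int[mu]_x (f x)%:E.
Proof.
move=> muT0 mf f_gt0.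
pose F k := [set x | (k.+1%:R^-1 < f x)%R].
have mF k : measurable (F k).
  rewrite (_ : F k = [set: T] `&` f @^-1` [set` `]k.+1%:R^-1, +oo[%R]); first exact: mf.
  by apply/seteqP; split => x /=; rewrite in_itv /= andbT; [split|case].
have FT : \bigcup_k F k = [set: T].
  apply/seteqP; split => // x _; exists (Num.truncn (f x)^-1) => //=.
  rewrite /F /= -[X in (_ < X)%R](invrK (f x)) ltf_pV2 ?posrE ?invr_gt0//.
  exact: truncnS_gt.
have ndF : {homo F : k l / (k <= l)%N >-> (k <= l)%O}.
  move=> k l kl; apply/subsetPset => x /=; apply: le_lt_trans.
  by rewrite lef_pV2 ?posrE// ler_nat.
have [k muFk] : exists k, 0 < mu (F k).
  apply/not_existsP => muF0; move: muT0; rewrite -FT.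
  have := nondecreasing_cvg_mu (mu := mu) mF (bigcup_measurable (fun k _ => mF k)) ndF.
  rewrite (_ : mu \o F = cst 0); last first.
    apply/funext => l /=; apply/eqP.
    by rewrite eq_le measure_ge0 andbT leNgt; apply/negP/muF0.
  by move=> /(cvg_lim (@ereal_hausdorff R)) <-; rewrite lim_cst ?eqxx.
apply: (@lt_le_trans _ _ (\int[mu]_x (k.+1%:R^-1 * \1_(F k) x)%:E)).
  under eq_integral do rewrite EFinM.
  rewrite ge0_integralZl//; last exact/measurable_EFinP/measurable_indic.
  by rewrite integral_indic// setIT mule_gt0// lte_fin invr_gt0.
apply: ge0_le_integral => //.
- exact/measurable_EFinP/measurable_funM.
- exact/measurable_EFinP.
- move=> x _; rewrite lee_fin indicE; have [/[!inE] /ltW|_] := boolP (x \in F k).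
    by rewrite mulr1.
  by rewrite mulr0 ltW.
Qed.

End integral_positivity.

Section disintegration.
Context d (T : measurableType d) (R : realType).
Local Open Scope ereal_scope.
Variables (Q : {measure set T -> \bar R}) (kap : T -> {measure set T -> \bar R}).
Hypothesis measurable_kap : forall B, measurable B -> measurable_fun [set: T] (kap ^~ B).
Variable D : set T.
Hypothesis mD : measurable D.
Hypothesis kapD : forall B, measurable B -> Q (B `&` D) = \int[Q]_(x in D) kap x B.

Import HBNNSimple.

Let disintegration_nnsfun (f : {nnsfun T >-> R}) :
  \int[Q]_(x in D) (f x)%:E = \int[Q]_(x in D) \int[kap x]_y (f y)%:E.
Proof.
have kap_fsum x : \int[kap x]_y (f y)%:E =
    \sum_(r \in range f) r%:E * kap x (f @^-1` [set r]).
  under eq_integral do rewrite fimfunE -fsumEFin//.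
  rewrite ge0_integral_fsum//; last 2 first.
  - by move=> r; exact/measurable_EFinP/measurableT_comp.
  - by move=> r z _; rewrite EFinM nnfun_muleindic_ge0.
  apply: eq_fsbigr => r _; rewrite (integralZl_indic _ (fun r => f @^-1` [set r]))//.
    by rewrite integral_indic// setIT.
  by move=> r0; rewrite preimage_nnfun0.
under [in RHS]eq_integral do rewrite kap_fsum.
under [in LHS]eq_integral do rewrite fimfunE -fsumEFin//.
rewrite !ge0_integral_fsum//; last 4 first.
- by move=> r; apply: measurable_funeM; exact/measurable_funTS/measurable_kap.
- by move=> r x _; apply: (mulemu_ge0 (fun r => f @^-1` [set r])); exact: preimage_nnfun0.
- by move=> r; exact/measurable_EFinP/measurable_funTS/measurableT_comp.
- by move=> r z _; rewrite EFinM nnfun_muleindic_ge0.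
apply: eq_fsbigr => r _.
rewrite (integralZl_indic _ (fun r => f @^-1` [set r]))//; last first.
  by move=> r0; rewrite preimage_nnfun0.
rewrite integral_indic// kapD//.
have [r_ge0|r_lt0] := leP 0%R r.
  by rewrite ge0_integralZl//; exact/measurable_funTS/measurable_kap.
by rewrite preimage_nnfun0// !integral0_eq ?mule0// => x _; rewrite measure0 ?mule0.
Qed.

Lemma ge0_integral_disintegration (f : T -> \bar R) :
  (forall y, 0 <= f y) -> measurable_fun [set: T] f ->
  \int[Q]_(x in D) f x = \int[Q]_(x in D) \int[kap x]_y f y.
Proof.
move=> f_ge0 mf; pose f_ := nnsfun_approx measurableT mf.
have f_nd y : nondecreasing_seq (fun k => (f_ k y)%:E).
  by move=> a b ab; rewrite lee_fin; exact/lefP/nd_nnsfun_approx.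
have int_f x : \int[kap x]_y f y = limn (fun k => \int[kap x]_y (f_ k y)%:E).
  rewrite -monotone_convergence//; last 2 first.
  - by move=> k; exact/measurable_EFinP.
  - by move=> k y _; rewrite lee_fin.
  apply: eq_integral => y _; apply/esym/cvg_lim => //.
  exact: cvg_nnsfun_approx.
have int_Df : \int[Q]_(x in D) f x = limn (fun k => \int[Q]_(x in D) (f_ k x)%:E).
  rewrite -monotone_convergence//; last 2 first.
  - by move=> k; exact/measurable_EFinP/measurable_funTS.
  - by move=> k x _; rewrite lee_fin.
  apply: eq_integral => x _; apply/esym/cvg_lim => //.
  exact: cvg_nnsfun_approx.
under [RHS]eq_integral do rewrite int_f.
rewrite int_Df monotone_convergence//; last 3 first.
- move=> k; apply/measurable_funTS/measurable_fun_integral_kernel => //.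
  + by move=> y; rewrite lee_fin.
  + exact/measurable_EFinP.
- by move=> k x _; apply: integral_ge0 => y _; rewrite lee_fin.
- move=> x _ a b ab; apply: ge0_le_integral => //.
  + by move=> y _; rewrite lee_fin.
  + exact/measurable_EFinP.
  + exact/measurable_EFinP.
  + by move=> y _; exact: f_nd.
by congr (limn _); apply/funext => k; exact: disintegration_nnsfun.
Qed.

End disintegration.

Section weighted_pushforward.
Context d d' (T : measurableType d) (T' : measurableType d') (R : realType).
Local Open Scope ereal_scope.
Variables (mu : {measure set T -> \bar R}) (psi : T -> T').
Hypothesis mpsi : measurable_fun [set: T] psi.

Import HBNNSimple.

Let weighted_integral_approx (u : T -> R) (phi : T' -> \bar R)
    (u_meas : measurable_fun [set: T] u) (u_ge0 : forall x, (0 <= u x)%R)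
    (mphi : measurable_fun [set: T'] phi) (phi_ge0 : forall y, 0 <= phi y) :
  \int[mu]_x ((u x)%:E * phi (psi x)) =
  limn (fun k => \int[mu]_x ((u x)%:E * (nnsfun_approx measurableT mphi k (psi x))%:E)).
Proof.
rewrite -monotone_convergence//; last 3 first.
- move=> k; apply: emeasurable_funM; first exact/measurable_EFinP.
  exact/measurable_EFinP/measurableT_comp.
- by move=> k x _; rewrite mule_ge0// lee_fin.
- move=> x _ a b ab; rewrite lee_wpmul2l ?lee_fin//.
  exact/lefP/nd_nnsfun_approx.
apply: eq_integral => x _; apply/esym/cvg_lim => //.
by apply: cvgeZl => //; exact: cvg_nnsfun_approx.
Qed.

Let weighted_integral_nnsfun (u : T -> R) (f : {nnsfun T' >-> R})
    (u_meas : measurable_fun [set: T] u) (u_ge0 : forall x, (0 <= u x)%R) :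
  \int[mu]_x ((u x)%:E * (f (psi x))%:E) =
  \sum_(r \in range f) r%:E * \int[mu]_x ((u x)%:E * (\1_(f @^-1` [set r]) (psi x))%:E).
Proof.
have mindic r : measurable_fun [set: T] (fun x => \1_(f @^-1` [set r]) (psi x) : R).
  apply: (measurableT_comp _ mpsi).
  exact: measurable_indic (measurable_funPTI f (measurable_set1 r)).
under eq_integral => x _.
  rewrite fimfunE -fsumEFin// ge0_mule_fsumr; last first.
    by move=> r; rewrite EFinM nnfun_muleindic_ge0.
  over.
rewrite ge0_integral_fsum//; last 2 first.
- move=> r; apply: emeasurable_funM; first exact/measurable_EFinP.
  exact/measurable_EFinP/measurable_funM.
- by move=> r x _; rewrite mule_ge0 ?lee_fin// -lee_fin EFinM nnfun_muleindic_ge0.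
apply: eq_fsbigr => r /[!inE] -[y _ <-].
rewrite -ge0_integralZl//; last 3 first.
- by apply: emeasurable_funM; exact/measurable_EFinP.
- by move=> x _; rewrite mule_ge0 ?lee_fin.
- by rewrite lee_fin.
by apply: eq_integral => x _; rewrite EFinM muleCA.
Qed.

Lemma eq_weighted_integral_comp (u v : T -> R) :
  measurable_fun [set: T] u -> (forall x, (0 <= u x)%R) ->
  measurable_fun [set: T] v -> (forall x, (0 <= v x)%R) ->
  (forall C, measurable C ->
    \int[mu]_x ((u x)%:E * (\1_C (psi x))%:E) = \int[mu]_x ((v x)%:E * (\1_C (psi x))%:E)) ->
  forall phi : T' -> \bar R, measurable_fun [set: T'] phi -> (forall y, 0 <= phi y) ->
  \int[mu]_x ((u x)%:E * phi (psi x)) = \int[mu]_x ((v x)%:E * phi (psi x)).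
Proof.
move=> u_meas u_ge0 v_meas v_ge0 uv phi mphi phi_ge0.
rewrite !weighted_integral_approx//; congr (limn _); apply/funext => k.
by rewrite !weighted_integral_nnsfun//; apply: eq_fsbigr => r _; rewrite uv.
Qed.

End weighted_pushforward.

Section selection_weight.
Context {R : realType} {M : pseudoMetricType R}.
Local Notation G := (G M).
Local Open Scope ereal_scope.
Variables (S : G -> R) (n : nat).
Hypotheses (S_ge0 : forall g, (0 <= S g)%R) (S_meas : measurable_fun [set: G] S).
Local Notation w := (wS S n).

Lemma wS_gt0 g : (0 < w g)%R. Proof. exact: expR_gt0. Qed.

Lemma wS_le1 g : (w g <= 1)%R.
Proof. by rewrite /wS expR_le1 mulNr oppr_le0 divr_ge0. Qed.

Lemma measurable_wS : measurable_fun [set: G] w.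
Proof.
apply: measurableT_comp; first exact: measurable_expR.
by apply: measurable_funM => //; exact: measurableT_comp S_meas.
Qed.

Definition mean_wS (P : probability G R) : R := fine (\int[P]_h (w h)%:E).

Lemma mean_wSE (P : probability G R) : \int[P]_h (w h)%:E = (mean_wS P)%:E.
Proof.
have int_le1 : \int[P]_h (w h)%:E <= 1.
  apply: (@le_trans _ _ (\int[P]_h (cst 1 h))).
    apply: ge0_le_integral => //.
    - by move=> h _; rewrite lee_fin; exact/ltW/wS_gt0.
    - by apply/measurable_EFinP; exact: measurable_wS.
    - by move=> h _; rewrite lee_fin wS_le1.
  by rewrite integral_cst// mul1e; exact: sprobability_setT.
rewrite fineK// ge0_fin_numE; first exact: le_lt_trans int_le1 (ltey _).
by apply: integral_ge0 => h _; rewrite lee_fin; exact/ltW/wS_gt0.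
Qed.

Lemma mean_wS_gt0 (P : probability G R) : (0 < mean_wS P)%R.
Proof.
rewrite -lte_fin -mean_wSE; apply: (@integral_gt0 _ G).
- rewrite (_ : (P : {measure set G -> \bar R}) [set: G] = 1) ?oner_neq0//.
  exact: probability_setT.
- exact: measurable_wS.
- exact: wS_gt0.
Qed.

Lemma measurable_mean_wS (kappa : G -> probability G R) :
  (forall B, measurable B -> measurable_fun [set: G] (kappa ^~ B)) ->
  measurable_fun [set: G] (fun g => mean_wS (kappa g)).
Proof.
move=> mkappa; apply/measurable_EFinP.
rewrite (_ : _ \o _ = fun g => \int[kappa g]_h (w h)%:E); last first.
  by apply/funext => g; rewrite /= mean_wSE.
apply: measurable_fun_integral_kernel => //.
- by move=> h; rewrite lee_fin; exact/ltW/wS_gt0.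
- by apply/measurable_EFinP; exact: measurable_wS.
Qed.

Lemma rcd_restr_eq {Q : probability G R} {A : set M} {kappa : G -> probability G R}
    {g h : G} : is_rcd Q A kappa -> restr A g = restr A h -> kappa g = kappa h.
Proof. by case=> _ kappa_restr _ gh; rewrite kappa_restr gh -kappa_restr. Qed.

Variables (Q : probability G R) (A : set M) (kappa : G -> probability G R).
Hypotheses (bA : borelM A) (kappa_rcd : is_rcd Q A kappa).

Lemma integral_wS_restr (Phi : G -> \bar R) :
  measurable_fun [set: G] Phi -> (forall h, 0 <= Phi h) ->
  \int[Q]_g ((w g)%:E * Phi (restr A g)) =
  \int[Q]_g ((mean_wS (kappa g))%:E * Phi (restr A g)).
Proof.
case: kappa_rcd => mkappa _ kappaQ mPhi Phi_ge0.
apply: (@eq_weighted_integral_comp _ _ G G R Q (restr A) (measurable_restr A bA)) => //.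
- exact: measurable_wS.
- by move=> g; exact/ltW/wS_gt0.
- exact: measurable_mean_wS.
- by move=> g; exact/ltW/mean_wS_gt0.
move=> C mC; set D := restr A @^-1` C.
have mD : measurable D by rewrite -[X in measurable X]setTI; exact: measurable_restr.
have indic_restr (u : G -> R) :
    \int[Q]_g ((u g)%:E * (\1_C (restr A g))%:E) = \int[Q]_(g in D) (u g)%:E.
  rewrite [RHS]integral_mkcond; apply: eq_integral => g _.
  rewrite /patch indicE; case: ifPn => [/set_mem Dg|/negP Dg].
    by rewrite mem_set// mule1.
  by rewrite memNset ?mule0// => /mem_set.
rewrite !indic_restr (@ge0_integral_disintegration _ G R Q (fun g => kappa g) mkappa _ mD)//.
- by apply: eq_integral => g _; rewrite mean_wSE.
- by move=> B mB; exact: kappaQ.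
- by move=> h; rewrite lee_fin; exact/ltW/wS_gt0.
- by apply/measurable_EFinP; exact: measurable_wS.
Qed.

Lemma sel_restr (Phi : G -> \bar R) :
  measurable_fun [set: G] Phi -> (forall h, 0 <= Phi h) ->
  sel Q S n (Phi \o restr A) =
  \int[Q]_g ((mean_wS (kappa g) / mean_wS Q)%:E * Phi (restr A g)).
Proof.
move=> mPhi Phi_ge0; have [mkappa _ _] := kappa_rcd.
rewrite /sel /= integral_wS_restr// -ge0_integralZr//.
- by apply: eq_integral => g _; rewrite muleAC -EFinM.
- apply: emeasurable_funM; last exact: measurableT_comp mPhi (measurable_restr A bA).
  by apply/measurable_EFinP; exact: measurable_mean_wS.
- by move=> g _; rewrite mule_ge0 ?lee_fin//; exact/ltW/mean_wS_gt0.
- by rewrite lee_fin invr_ge0; exact/ltW/mean_wS_gt0.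
Qed.

End selection_weight.

Section recombination.
Context {R : realType} {M : pseudoMetricType R}.
Local Notation G := (G M).
Local Open Scope ereal_scope.
Variables (K : nat) (A : 'I_K -> set M).

Lemma eq_recomb_rec (J : (G -> \bar R) -> \bar R) (l : seq 'I_K) (P : G -> Prop)
    (acc : G) (F F' : G -> \bar R) :
  P acc -> (forall s j g, j \in l -> P s -> P (gadd s (restr (A j) g))) ->
  (forall s, P s -> F s = F' s) ->
  recomb_rec J [seq A i | i <- l] acc F = recomb_rec J [seq A i | i <- l] acc F'.
Proof.
elim: l acc => [|i l IH] acc Pacc Pstep FF' /=; first exact: FF'.
congr J; apply/funext => g; apply: IH => //.
- by apply: Pstep => //; rewrite mem_head.
- by move=> s j h jl Ps; apply: Pstep => //; rewrite in_cons jl orbT.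
Qed.

Variable Q : probability G R.
Hypothesis bA : forall i, borelM (A i).
Local Notation integral_Q := (fun F : G -> \bar R => \int[Q]_g F g).

Lemma recomb_rec_ge0 (l : seq 'I_K) acc (F : G -> \bar R) : (forall s, 0 <= F s) ->
  0 <= recomb_rec integral_Q [seq A i | i <- l] acc F.
Proof.
move=> F_ge0; elim: l acc => [|i l IH] acc /=; first exact: F_ge0.
by apply: integral_ge0 => g _; exact: IH.
Qed.

Lemma measurable_recomb_rec (l : seq 'I_K) (F : G -> \bar R) :
  measurable_fun [set: G] F -> (forall s, 0 <= F s) ->
  measurable_fun [set: G] (fun acc => recomb_rec integral_Q [seq A i | i <- l] acc F).
Proof.
move=> mF F_ge0; elim: l => [|i l IH] //=.
pose f (p : G * G) := recomb_rec integral_Q [seq A i | i <- l] (gadd p.1 (restr (A i) p.2)) F.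
have mf : measurable_fun [set: G * G] f.
  exact: measurableT_comp IH (measurable_gadd_restr _ (bA i)).
exact: (measurable_fun_fubini_tonelli_F (m2 := Q) f mf (fun p => recomb_rec_ge0 l _ _ F_ge0)).
Qed.

Lemma recomb_recZ (l : seq 'I_K) (k : R) acc (F : G -> \bar R) :
  (0 <= k)%R -> measurable_fun [set: G] F -> (forall s, 0 <= F s) ->
  recomb_rec integral_Q [seq A i | i <- l] acc (fun s => k%:E * F s) =
  k%:E * recomb_rec integral_Q [seq A i | i <- l] acc F.
Proof.
move=> k_ge0 mF F_ge0; elim: l acc => [|i l IH] acc //=.
under eq_integral do rewrite IH.
rewrite ge0_integralZl//; last by move=> g _; exact: recomb_rec_ge0.
apply: (measurableT_comp (f := fun a => recomb_rec integral_Q [seq A i | i <- l] a F)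
                         (g := fun g => gadd acc (restr (A i) g))).
  exact: measurable_recomb_rec.
exact: measurableT_comp (measurable_gaddl acc) (measurable_restr _ (bA i)).
Qed.

End recombination.

Section recombined_selection.
Context {R : realType} {M : pseudoMetricType R}.
Local Notation G := (G M).
Local Open Scope ereal_scope.
Variables (S : G -> R) (n : nat).
Hypotheses (S_ge0 : forall g, (0 <= S g)%R) (S_meas : measurable_fun [set: G] S).
Variables (Q : probability G R) (K : nat) (A : 'I_K -> set M).
Variable kappa : 'I_K -> G -> probability G R.
Hypotheses (A_part : is_borel_partition A) (kappa_rcd : forall i, is_rcd Q (A i) (kappa i)).
Local Notation integral_Q := (fun F : G -> \bar R => \int[Q]_g F g).

Let bA i : borelM (A i). Proof. by case: A_part. Qed.

Let disjA i j : i != j -> A i `&` A j = set0.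
Proof. by case: A_part => _ _ + _; apply. Qed.

Definition recomb_density (l : seq 'I_K) (s : G) : R :=
  \prod_(j <- l) (mean_wS S n (kappa j s) / mean_wS S n Q).

Lemma recomb_density_ge0 l s : (0 <= recomb_density l s)%R.
Proof. by apply: prodr_ge0 => j _; apply: divr_ge0; exact/ltW/mean_wS_gt0. Qed.

Lemma measurable_recomb_density l : measurable_fun [set: G] (recomb_density l).
Proof.
elim: l => [|i l IH].
  by rewrite /recomb_density; under eq_fun do rewrite big_nil; exact: measurable_cst.
rewrite /recomb_density; under eq_fun do rewrite big_cons.
apply: measurable_funM => //; apply: measurable_funM => //.
by apply: measurable_mean_wS; case: (kappa_rcd i).
Qed.

Lemma recomb_rec_sel (l : seq 'I_K) : uniq l -> forall acc : G,
  (forall i, i \in l -> restr (A i) acc = gzero) ->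
  forall F, measurable_fun [set: G] F -> (forall s, 0 <= F s) ->
  recomb_rec (sel Q S n) [seq A i | i <- l] acc F =
  recomb_rec integral_Q [seq A i | i <- l] acc (fun s => F s * (recomb_density l s)%:E).
Proof.
elim: l => [|i l IH] /=.
  by move=> _ acc _ F _ _; rewrite /recomb_density big_nil mule1.
move=> /andP[il ul] acc acc0 F mF F_ge0.
have disj_il j : j \in l -> A j `&` A i = set0.
  by move=> jl; apply: disjA; apply: contraNneq il => <-.
pose Fl s := F s * (recomb_density l s)%:E.
have mFl : measurable_fun [set: G] Fl.
  by apply: emeasurable_funM => //; apply/measurable_EFinP; exact: measurable_recomb_density.
have Fl_ge0 s : 0 <= Fl s by rewrite mule_ge0 ?lee_fin ?recomb_density_ge0.
pose Psi h := recomb_rec integral_Q [seq A i | i <- l] (gadd acc h) Fl.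
have mPsi : measurable_fun [set: G] Psi.
  apply: (measurableT_comp (f := fun a => recomb_rec integral_Q [seq A i | i <- l] a Fl)
                           (g := gadd acc)); last exact: measurable_gaddl.
  exact: measurable_recomb_rec.
rewrite (_ : (fun g => _) = Psi \o restr (A i)); last first.
  apply/funext => g; apply: IH => // j jl.
  by rewrite restr_gadd_restr_disjoint// ?acc0 ?in_cons ?jl ?orbT// disj_il.
rewrite (sel_restr _ _ S_ge0 S_meas _ _ _ (bA i) (kappa_rcd i))//; last first.
  by move=> h; exact: recomb_rec_ge0.
apply: eq_integral => g _; rewrite -recomb_recZ//; last first.
  by apply: divr_ge0; exact/ltW/mean_wS_gt0.
(* only [g_{A_i}] matters for the i-th density factor, and later restrictions keep it *)
apply: (eq_recomb_rec _ _ _ _ (fun s : G => restr (A i) s = restr (A i) g)).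
- by rewrite restr_gadd_restr// acc0 ?mem_head// gadd0g.
- move=> s j h jl <-; rewrite restr_gadd_restr_disjoint// disjA//.
  by apply: contraNneq il => ->.
- move=> s si; rewrite /Fl /recomb_density big_cons.
  by rewrite (rcd_restr_eq (kappa_rcd i) si) EFinM muleCA.
Qed.

Lemma expeR_Shat (g : G) : (0 < n)%N ->
  expeR (- Shat Q S n kappa g * ((n%:R)^-1)%:E) = (recomb_density (enum 'I_K) g)%:E.
Proof.
move=> n_gt0.
have lne_mean (P : probability G R) :
    lne (\int[P]_h (wS S n h)%:E) = (ln (mean_wS S n P))%:E.
  by rewrite mean_wSE// lne_EFin// mean_wS_gt0.
rewrite /Shat (eq_bigr (fun i => (ln (mean_wS S n (kappa i g)) - ln (mean_wS S n Q))%:E));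
  last by move=> i _; rewrite !lne_mean.
rewrite sumEFin !mulNe oppeK -!EFinM /= mulrAC divff ?mul1r ?pnatr_eq0 -?lt0n//.
rewrite expR_sum /recomb_density big_enum /=; congr EFin; apply: eq_big => // i _.
by rewrite expRB !lnK// posrE mean_wS_gt0.
Qed.

End recombined_selection.

Theorem lemma7p2 (R : realType) (M : completePseudoMetricType R)
  (M_hausdorff : hausdorff_space M)
  (M_separable : exists D : set M, countable D /\ dense D)
  (S : G M -> R) (S_ge0 : forall g, 0 <= S g) (S_meas : measurable_fun setT S)
  (n : nat) (n_gt0 : (0 < n)%N)
  (K : nat) (A : 'I_K -> set M) (A_part : is_borel_partition A)
  (Q : probability (G M) R)
  (kappa : 'I_K -> G M -> probability (G M) R)
  (kappa_rcd : forall i, is_rcd Q (A i) (kappa i)) :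
  forall E : set (G M), measurable E ->
    recomb (sel Q S n) A (fun g => (\1_E g)%:E) =
    recomb (fun F => (\int[Q]_g F g)%E) A
      (fun g => ((\1_E g)%:E *
                 expeR (- Shat Q S n kappa g * ((n%:R)^-1)%:E))%E).
Proof.
move=> E mE; have [bA _ _ _] := A_part.
rewrite /recomb (recomb_rec_sel _ _ S_ge0 S_meas _ _ _ _ A_part kappa_rcd) ?enum_uniq//.
- by congr recomb_rec; apply/funext => g; rewrite expeR_Shat.
- by move=> i _; rewrite restr_gzero.
- exact/measurable_EFinP/measurable_indic.
Qed.
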